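(* Let $(k,|\cdot|)$ be a complete non-archimedean valued field with $|k^\times| \neq \{1\}$, and let $p$ be a prime number with $|p|=1$. Let $r:=(r_1,\ldots,r_n)$ be a tuple of positive real numbers and $f \in k\{r^{-1}T\}=k\{r_1^{-1}T_1,\ldots,r_n^{-1}T_n\}$. Then for every $a \in \bar{k}$ with $|a|_{\bar{k}} > \|f\|_{k\{r^{-1}T\}}$, the element $f + a \in k\{r^{-1}T\} \otimes_k \bar{k}$ admits a compatible system of $p$-power roots.
   Context: $k\{r^{-1}T\}$ is the Banach $k$-algebra of power series $\sum_{\nu\in\mathbb{Z}_{\ge0}^n} a_\nu T^\nu$ with $a_\nu \in k$ and $|a_\nu| r^\nu \to 0$, normed by $\|\sum a_\nu T^\nu\| = \max_\nu |a_\nu| r^\nu$. $\bar{k}$ is an algebraic closure of $k$ with the unique extension $|\cdot|_{\bar k}$ of the absolute value. A compatible system of $p$-power roots of an element $g$ of a ring $R$ is a sequence $\{g^{1/p^e}\}_{e\ge0}$ in $R$ with $g^{1/p^0}=g$ and $(g^{1/p^{e+1}})^p = g^{1/p^e}$ for all $e$. *)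

From HB Require Import structures.
From mathcomp Require Import all_boot all_order all_algebra.
From mathcomp Require Import boolp classical_sets reals.
Set Implicit Arguments. Unset Strict Implicit. Unset Printing Implicit Defensive.
Import Order.TTheory GRing.Theory Num.Theory.
Local Open Scope ring_scope.
Local Open Scope classical_set_scope.

Definition nonarch_abs (R : realType) (K : fieldType) (v : K -> R) : Prop :=
  [/\ forall x, 0 <= v x,
      forall x, v x = 0 <-> x = 0,
      forall x y, v (x * y) = v x * v y
    & forall x y, v (x + y) <= Num.max (v x) (v y)].

Definition complete_abs (R : realType) (K : fieldType) (v : K -> R) : Prop :=
  forall u : nat -> K,
    (forall eps : R, 0 < eps -> exists N, forall m n, (N <= m)%N -> (N <= n)%N ->
        v (u m - u n) < eps) ->
    exists l : K, forall eps : R, 0 < eps -> exists N, forall m, (N <= m)%N ->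
        v (u m - l) < eps.

Definition nontrivial_abs (R : realType) (K : fieldType) (v : K -> R) : Prop :=
  exists x : K, x != 0 /\ v x != 1.

Definition multi_index (n : nat) := {ffun 'I_n -> nat}.
Definition pseries (K : Type) (n : nat) := multi_index n -> K.

Definition mi_deg n (nu : multi_index n) : nat := (\sum_(i < n) nu i)%N.
Definition mi_zero n : multi_index n := [ffun => 0%N].

Definition rpow (R : realType) n (r : 'I_n -> R) (nu : multi_index n) : R :=
  \prod_(i < n) r i ^+ nu i.

(* f lies in k{r^{-1}T}: |a_nu| r^nu -> 0 (along the cofinite filter on multi-indices). *)
Definition in_tate (R : realType) (K : fieldType) (v : K -> R) n (r : 'I_n -> R)
    (f : pseries K n) : Prop :=
  forall eps : R, 0 < eps -> exists N : nat, forall nu : multi_index n,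
    (N < mi_deg nu)%N -> v (f nu) * rpow r nu < eps.

(* Gauss norm ||f|| = max_nu |a_nu| r^nu (written as the supremum, which is attained). *)
Definition tate_norm (R : realType) (K : fieldType) (v : K -> R) n (r : 'I_n -> R)
    (f : pseries K n) : R :=
  sup [set x : R | exists nu : multi_index n, x = v (f nu) * rpow r nu].

Definition ps_mul (L : comNzRingType) n (x y : pseries L n) : pseries L n :=
  fun nu => \sum_(mu : {ffun 'I_n -> 'I_(mi_deg nu).+1} | [forall i, (mu i <= nu i)%N])
      x [ffun i => nat_of_ord (mu i)] * y [ffun i => (nu i - mu i)%N].

Definition ps_one (L : comNzRingType) n : pseries L n :=
  fun nu => if nu == mi_zero n then 1 else 0.

Definition ps_exp (L : comNzRingType) n (x : pseries L n) (m : nat) : pseries L n :=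
  iter m (ps_mul x) (@ps_one L n).

(* The image of k{r^{-1}T} (x)_k L inside L[[T]] (the natural map is injective):
   finite sums  sum_i f_i (x) b_i  with f_i in k{r^{-1}T} and b_i in L. *)
Definition in_tate_tensor (R : realType) (k : fieldType) (v : k -> R) n (r : 'I_n -> R)
    (L : fieldType) (iota : {rmorphism k -> L}) (g : pseries L n) : Prop :=
  exists (m : nat) (fs : 'I_m -> pseries k n) (bs : 'I_m -> L),
    (forall i, in_tate v r (fs i)) /\
    (forall nu, g nu = \sum_(i < m) iota (fs i nu) * bs i).

(* f + a, i.e. f (x) 1 + 1 (x) a, as an L-power series *)
Definition tensor_add_const (k L : fieldType) (iota : {rmorphism k -> L}) n
    (f : pseries k n) (a : L) : pseries L n :=
  fun nu => iota (f nu) + (if nu == mi_zero n then a else 0).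

Definition has_compatible_proots (R : realType) (k : fieldType) (v : k -> R) n
    (r : 'I_n -> R) (L : fieldType) (iota : {rmorphism k -> L}) (p : nat)
    (g : pseries L n) : Prop :=
  exists s : nat -> pseries L n,
    (forall e, in_tate_tensor v r iota (s e)) /\
    (forall nu, s 0%N nu = g nu) /\
    (forall e nu, ps_exp (s e.+1) p nu = s e nu).

(* Write g = f + a: its constant coefficient dominates, every other coefficient
   having weight at most rho |a| with rho = ||f|| / |a| < 1. Such a series has a
   p-th root w computed degree by degree, since (w^p)_nu = p w_0^(p-1) w_nu + (terms
   of lower degree) and |p| = 1. Non-archimedean estimates show that w again has a
   dominant constant term, with the same rho, and decaying weights, so the
   construction iterates. The coefficients of each root lie in k[b] for some
   algebraic b; as k is complete, all norms on this finite-dimensional k-space are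
   equivalent, so the coordinates of the coefficients in a k-basis of k[b] decay
   too, which places each root in k{r^-1 T} (x)_k kbar. *)

From mathcomp Require Import all_boot all_order all_algebra.
From mathcomp Require Import boolp classical_sets reals.
From mathcomp Require Import zify ring lra.
Set Implicit Arguments. Unset Strict Implicit. Unset Printing Implicit Defensive.
Import Order.TTheory GRing.Theory Num.Theory.
Local Open Scope ring_scope.

Definition mi_le n (a b : multi_index n) := [forall i, (a i <= b i)%N].

Definition mi_split n (a b nu : multi_index n) := forall i, (a i + b i = nu i)%N.

Section MultiIndex.
Variable n : nat.
Implicit Types a b c nu mu : multi_index n.

Lemma mi_le_trans a b c : mi_le a b -> mi_le b c -> mi_le a c.
Proof.
by move=> /forallP leab /forallP lebc; apply/forallP => i; exact: leq_trans (leab i) (lebc i).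
Qed.

Lemma mi_le0 a : mi_le (mi_zero n) a.
Proof. by apply/forallP => i; rewrite ffunE. Qed.

Lemma leq_mi_deg nu i : (nu i <= mi_deg nu)%N.
Proof. by rewrite /mi_deg (bigD1 i) //= leq_addr. Qed.

Lemma mi_deg_eq0 a : (mi_deg a == 0%N) = (a == mi_zero n).
Proof.
rewrite /mi_deg sum_nat_eq0; apply/forallP/eqP => [a0|->].
  by apply/ffunP => i; rewrite ffunE; apply/eqP; exact: a0.
by move=> i; rewrite ffunE.
Qed.

Lemma mi_deg_zero : mi_deg (mi_zero n) = 0%N.
Proof. by apply/eqP; rewrite mi_deg_eq0. Qed.

Lemma mi_deg_gt0 a : (0 < mi_deg a)%N = (a != mi_zero n).
Proof. by rewrite lt0n mi_deg_eq0. Qed.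

Lemma mi_split_deg a b nu : mi_split a b nu -> (mi_deg a + mi_deg b)%N = mi_deg nu.
Proof. by move=> abnu; rewrite /mi_deg -big_split; apply: eq_bigr => i _; exact: abnu. Qed.

Lemma mi_split_lel a b nu : mi_split a b nu -> mi_le a nu.
Proof. by move=> abnu; apply/forallP => i; rewrite -abnu leq_addr. Qed.

Lemma mi_split_ler a b nu : mi_split a b nu -> mi_le b nu.
Proof. by move=> abnu; apply/forallP => i; rewrite -abnu leq_addl. Qed.

Lemma mi_split0l b nu : mi_split (mi_zero n) b nu -> b = nu.
Proof. by move=> bnu; apply/ffunP => i; rewrite -bnu ffunE. Qed.

Lemma mi_split0r a nu : mi_split a (mi_zero n) nu -> a = nu.
Proof. by move=> anu; apply/ffunP => i; rewrite -anu ffunE addn0. Qed.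

Lemma mi_deg_le a b : mi_le a b -> (mi_deg a <= mi_deg b)%N.
Proof. by move=> /forallP leab; apply: leq_sum => i _; exact: leab. Qed.

Lemma mi_deg_lt a nu : mi_le a nu -> a != nu -> (mi_deg a < mi_deg nu)%N.
Proof.
move=> /forallP lean neq.
pose b : multi_index n := [ffun i => (nu i - a i)%N].
have abnu : mi_split a b nu by move=> i; rewrite ffunE subnKC.
rewrite -(mi_split_deg abnu) -{1}[mi_deg a]addn0 ltn_add2l mi_deg_gt0.
by apply: contra neq => /eqP b0; apply/eqP/mi_split0r; rewrite -b0.
Qed.

Lemma mi_split_deg_gt a b nu D1 D2 : mi_split a b nu -> (D1 + D2 < mi_deg nu)%N ->
  (D1 < mi_deg a)%N \/ (D2 < mi_deg b)%N.
Proof. move=> /mi_split_deg <-; lia. Qed.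

End MultiIndex.

Section PowerSeries.
Variables (L : comNzRingType) (n : nat).
Implicit Types (x y : pseries L n) (a b nu : multi_index n).

(* The summation index of [ps_mul x y nu] encodes the split nu = mu + (nu - mu). *)
Local Notation cut nu := {ffun 'I_n -> 'I_(mi_deg nu).+1}.

Definition cut_fst nu (mu : cut nu) : multi_index n := [ffun i => nat_of_ord (mu i)].
Definition cut_snd nu (mu : cut nu) : multi_index n := [ffun i => (nu i - mu i)%N].
Definition cut_ok nu (mu : cut nu) : bool := [forall i, (mu i <= nu i)%N].

Definition cut0 nu : cut nu := [ffun i => ord0].
Definition cut_top nu : cut nu := [ffun i => inord (nu i)].

Lemma ps_mulE x y nu :
  ps_mul x y nu = \sum_(mu : cut nu | cut_ok mu) x (cut_fst mu) * y (cut_snd mu).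
Proof. by []. Qed.

Lemma cut_split nu (mu : cut nu) : cut_ok mu -> mi_split (cut_fst mu) (cut_snd mu) nu.
Proof. by move=> /forallP lemu i; rewrite !ffunE subnKC. Qed.

Lemma cut_fst_inj nu : injective (@cut_fst nu).
Proof.
move=> mu mu' /ffunP eq_fst; apply/ffunP => i; apply: val_inj.
by have := eq_fst i; rewrite !ffunE.
Qed.

Lemma cut_ok0 nu : cut_ok (cut0 nu).
Proof. by apply/forallP => i; rewrite ffunE. Qed.

Lemma cut_ok_top nu : cut_ok (cut_top nu).
Proof. by apply/forallP => i; rewrite ffunE inordK // ltnS leq_mi_deg. Qed.

Lemma cut_fst0 nu : cut_fst (cut0 nu) = mi_zero n.
Proof. by apply/ffunP => i; rewrite !ffunE. Qed.

Lemma cut_snd0 nu : cut_snd (cut0 nu) = nu.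
Proof. by apply/ffunP => i; rewrite !ffunE subn0. Qed.

Lemma cut_fst_top nu : cut_fst (cut_top nu) = nu.
Proof. by apply/ffunP => i; rewrite !ffunE inordK // ltnS leq_mi_deg. Qed.

Lemma cut_snd_top nu : cut_snd (cut_top nu) = mi_zero n.
Proof. by apply/ffunP => i; rewrite !ffunE inordK ?subnn // ltnS leq_mi_deg. Qed.

Lemma cut_fst_eq0 nu (mu : cut nu) : (cut_fst mu == mi_zero n) = (mu == cut0 nu).
Proof. by rewrite -(cut_fst0 nu) (inj_eq (@cut_fst_inj nu)). Qed.

Lemma cut_fst_eq nu (mu : cut nu) : (cut_fst mu == nu) = (mu == cut_top nu).
Proof.
by apply/eqP/eqP => [eq_nu|->]; [apply: cut_fst_inj; rewrite cut_fst_top | exact: cut_fst_top].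
Qed.

Lemma ps_mul_coef0 x y : ps_mul x y (mi_zero n) = x (mi_zero n) * y (mi_zero n).
Proof.
rewrite ps_mulE (bigD1 (cut0 _)) ?cut_ok0 //= cut_fst0 cut_snd0 big1 ?addr0 //.
move=> mu /andP[ok_mu]; rewrite -cut_fst_eq0 => /eqP[]; apply/eqP.
rewrite -mi_deg_eq0 -leqn0 -(mi_deg_zero n).
exact/mi_deg_le/(mi_split_lel (cut_split ok_mu)).
Qed.

Lemma ps_mul_coef_ends x y nu : nu != mi_zero n ->
  ps_mul x y nu = x (mi_zero n) * y nu + x nu * y (mi_zero n) +
    \sum_(mu : cut nu | [&& cut_ok mu, cut_fst mu != mi_zero n & cut_fst mu != nu])
      x (cut_fst mu) * y (cut_snd mu).
Proof.
move=> nu0; rewrite ps_mulE (bigD1 (cut0 _)) ?cut_ok0 //= cut_fst0 cut_snd0.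
have top_neq0 : cut_top nu != cut0 nu by rewrite -cut_fst_eq0 cut_fst_top.
rewrite (bigD1 (cut_top nu)) /=; last by rewrite cut_ok_top top_neq0.
rewrite cut_fst_top cut_snd_top addrA; congr (_ + _ + _); apply: eq_bigl => mu.
by rewrite cut_fst_eq0 cut_fst_eq andbA.
Qed.

Lemma ps_expS x m : ps_exp x m.+1 = ps_mul x (ps_exp x m).
Proof. by []. Qed.

Lemma ps_exp_coef0 x m : ps_exp x m (mi_zero n) = x (mi_zero n) ^+ m.
Proof.
elim: m => [|m IHm]; first by rewrite /ps_exp /= /ps_one eqxx.
by rewrite ps_expS ps_mul_coef0 IHm exprS.
Qed.

Lemma eq_ps_exp_coef x y nu : (forall mu, mi_le mu nu -> x mu = y mu) ->
  forall m, ps_exp x m nu = ps_exp y m nu.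
Proof.
move=> eq_xy m; elim: m nu eq_xy => [|m IHm] nu eq_xy //.
rewrite !ps_expS !ps_mulE; apply: eq_bigr => mu /cut_split split_mu.
rewrite eq_xy ?(mi_split_lel split_mu) // (IHm (cut_snd mu)) // => mu' le_mu'.
exact/eq_xy/(mi_le_trans le_mu')/(mi_split_ler split_mu).
Qed.

(* Apart from m x_0^(m-1) x_nu, every term of (x^m)_nu involves only coefficients
   strictly below nu. *)
Lemma ps_exp_coef_linear x x' nu : nu != mi_zero n ->
  (forall mu, mi_le mu nu -> mu != nu -> x mu = x' mu) -> x' nu = 0 ->
  forall m, ps_exp x m nu = ps_exp x' m nu + m%:R * x (mi_zero n) ^+ m.-1 * x nu.
Proof.
move=> nu0 eq_below x'nu m; elim: m => [|m IHm].
  by rewrite /ps_exp /= /ps_one (negbTE nu0) !mul0r addr0.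
have x0E : x (mi_zero n) = x' (mi_zero n) by rewrite eq_below ?mi_le0 // eq_sym.
rewrite !ps_expS !(ps_mul_coef_ends _ _ nu0) IHm x'nu mul0r addr0 ps_exp_coef0 -x0E.
rewrite [X in _ + X = _](eq_bigr (fun mu => x' (cut_fst mu) * ps_exp x' m (cut_snd mu))).
  case: m {IHm} => [|m]; first by rewrite /= !mul0r !expr0; ring.
  by rewrite /= exprS; ring.
move=> mu /and3P[/cut_split split_mu fst0 fst_nu].
have lt_snd : (mi_deg (cut_snd mu) < mi_deg nu)%N.
  by rewrite -(mi_split_deg split_mu) -{1}[mi_deg _]add0n ltn_add2r mi_deg_gt0.
rewrite eq_below ?(mi_split_lel split_mu) //; congr (_ * _).
apply: eq_ps_exp_coef => mu' le_mu'; apply: eq_below.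
  exact: mi_le_trans le_mu' (mi_split_ler split_mu).
apply: contraTneq lt_snd => eq_nu; rewrite -leqNgt.
by move: le_mu'; rewrite eq_nu => /mi_deg_le.
Qed.

Section SubringClosure.
Variable S : L -> Prop.
Hypotheses (S0 : S 0) (S1 : S 1) (SD : forall s t, S s -> S t -> S (s + t))
  (SM : forall s t, S s -> S t -> S (s * t)).

Lemma ps_exp_closed x : (forall mu, S (x mu)) -> forall m nu, S (ps_exp x m nu).
Proof.
move=> Sx m; elim: m => [|m IHm] nu; first by rewrite /ps_exp /= /ps_one; case: ifP.
by rewrite ps_expS ps_mulE; elim/big_ind: _ => // mu _; apply: SM.
Qed.

End SubringClosure.

End PowerSeries.

Section AbsoluteValue.
Variables (R : realType) (K : fieldType) (w : K -> R).
Hypothesis hw : nonarch_abs w.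
Implicit Types x y : K.

Lemma abs_ge0 x : 0 <= w x. Proof. by case: hw. Qed.

Lemma abs_eq0 x : (w x == 0) = (x == 0).
Proof. by case: hw => _ w0 _ _; apply/eqP/eqP => /w0. Qed.

Lemma abs0 : w 0 = 0. Proof. by apply/eqP; rewrite abs_eq0. Qed.

Lemma absM x y : w (x * y) = w x * w y. Proof. by case: hw. Qed.

Lemma absD_max x y : w (x + y) <= Num.max (w x) (w y). Proof. by case: hw. Qed.

Lemma absD_le x y B : w x <= B -> w y <= B -> w (x + y) <= B.
Proof. by move=> xB yB; apply: le_trans (absD_max x y) _; rewrite ge_max xB yB. Qed.

Lemma abs1 : w 1 = 1.
Proof.
have w1_neq0 : w 1 != 0 by rewrite abs_eq0 oner_eq0.
by apply: (mulfI w1_neq0); rewrite -absM !mulr1.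
Qed.

Lemma absN x : w (- x) = w x.
Proof.
suff wN1 : w (-1) = 1 by rewrite -mulN1r absM wN1 mul1r.
have /eqP : w (-1) ^+ 2 = 1 by rewrite expr2 -absM mulrNN mulr1 abs1.
rewrite sqrf_eq1 => /orP[/eqP // | /eqP wN1].
by have := abs_ge0 (-1); rewrite wN1 ler0N1.
Qed.

Lemma absV x : w x^-1 = (w x)^-1.
Proof.
have [->|x0] := eqVneq x 0; first by rewrite invr0 abs0 invr0.
by apply: (mulfI (_ : w x != 0)); rewrite ?abs_eq0 // -absM !mulfV ?abs1 ?abs_eq0.
Qed.

Lemma absX x m : w (x ^+ m) = w x ^+ m.
Proof. by elim: m => [|m IHm]; rewrite ?expr0 ?abs1 // !exprS absM IHm. Qed.

Lemma abs_sum (I : finType) (P : pred I) (F : I -> K) B :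
  0 <= B -> (forall i, P i -> w (F i) <= B) -> w (\sum_(i | P i) F i) <= B.
Proof.
by move=> B0 FB; elim/big_ind: _ => //; [rewrite abs0 | move=> x y; apply: absD_le].
Qed.

Lemma absD_dominant x y : w y < w x -> w (x + y) = w x.
Proof.
move=> lt_yx; apply/le_anti/andP; split; first by apply: absD_le => //; exact: ltW.
have := absD_max (x + y) (- y); rewrite addrK absN le_max => /orP[] // le_xy.
by have := lt_le_trans lt_yx le_xy; rewrite ltxx.
Qed.

End AbsoluteValue.

Section Weights.
Variables (R : realType) (n : nat) (r : 'I_n -> R).
Hypothesis hr : forall i, 0 < r i.

Lemma rpow_gt0 nu : 0 < rpow r nu.
Proof. by apply: prodr_gt0 => i _; rewrite exprn_gt0. Qed.

Lemma rpow_ge0 nu : 0 <= rpow r nu.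
Proof. exact: ltW (rpow_gt0 nu). Qed.

Lemma rpow0 : rpow r (mi_zero n) = 1.
Proof. by rewrite /rpow big1 // => i _; rewrite ffunE expr0. Qed.

Lemma rpow_split (a b nu : multi_index n) : mi_split a b nu ->
  rpow r a * rpow r b = rpow r nu.
Proof.
by move=> abnu; rewrite /rpow -big_split; apply: eq_bigr => i _ /=; rewrite -exprD abnu.
Qed.

Variables (K : fieldType) (w : K -> R).
Hypothesis hw : nonarch_abs w.
Implicit Types (x y : pseries K n) (a b nu mu : multi_index n).

Definition weight x nu := w (x nu) * rpow r nu.

Lemma weight_ge0 x nu : 0 <= weight x nu.
Proof. exact: mulr_ge0 (abs_ge0 hw _) (rpow_ge0 nu). Qed.

Lemma weight0 x : weight x (mi_zero n) = w (x (mi_zero n)).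
Proof. by rewrite /weight rpow0 mulr1. Qed.

Lemma weightB_le x y nu :
  w (x nu - y nu) * rpow r nu <= Num.max (weight x nu) (weight y nu).
Proof.
rewrite /weight -maxr_pMl ?rpow_ge0 // ler_wpM2r ?rpow_ge0 //.
by apply: le_trans (absD_max hw _ _) _; rewrite absN.
Qed.

Lemma weight_mul_le x y nu B : 0 <= B ->
  (forall a b, mi_split a b nu -> weight x a * weight y b <= B) ->
  weight (ps_mul x y) nu <= B.
Proof.
move=> B0 termB; rewrite /weight ps_mulE -ler_pdivlMr ?rpow_gt0 //.
apply: abs_sum => // [|mu /cut_split split_mu]; first by rewrite divr_ge0 ?rpow_ge0.
rewrite ler_pdivlMr ?rpow_gt0 // absM // -(rpow_split split_mu).
by apply: le_trans (termB _ _ split_mu); rewrite /weight mulrACA.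
Qed.

Section Bounds.
Variables (rho B : R).
Hypotheses (rho_ge0 : 0 <= rho) (rho_le1 : rho <= 1) (B_ge0 : 0 <= B).

Definition weight_bounded x c D lam := w (x (mi_zero n)) = c /\
  forall mu, mi_le mu lam -> mu != mi_zero n ->
    weight x mu <= rho * c /\ ((D < mi_deg mu)%N -> weight x mu <= B * c).

Lemma weight_bounded_one D lam : weight_bounded (@ps_one K n) 1 D lam.
Proof.
split=> [|mu _ mu0]; first by rewrite /ps_one eqxx abs1.
by rewrite /weight /ps_one (negbTE mu0) abs0 // mul0r !mulr1.
Qed.

Lemma weight_bounded_mul x y c1 c2 D1 D2 lam :
  weight_bounded x c1 D1 lam -> weight_bounded y c2 D2 lam ->
  weight_bounded (ps_mul x y) (c1 * c2) (D1 + D2) lam.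
Proof.
move=> [x0 xB] [y0 yB]; split=> [|mu le_mu mu0]; first by rewrite ps_mul_coef0 absM // x0 y0.
have [c1_ge0 c2_ge0] : 0 <= c1 /\ 0 <= c2 by rewrite -x0 -y0 !abs_ge0.
have terms a b : mi_split a b mu -> weight x a * weight y b <= rho * (c1 * c2) /\
    ((D1 + D2 < mi_deg mu)%N -> weight x a * weight y b <= B * (c1 * c2)).
  move=> split_mu; have le_a := mi_le_trans (mi_split_lel split_mu) le_mu.
  have le_b := mi_le_trans (mi_split_ler split_mu) le_mu.
  have [a0E|a0] := eqVneq a (mi_zero n).
    rewrite a0E in split_mu *; rewrite weight0 x0 (mi_split0l split_mu).
    rewrite [rho * _]mulrCA [B * _]mulrCA.
    have [yr yB'] := yB mu le_mu mu0.
    split=> [|deg_mu]; apply: ler_wpM2l => //.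
    exact/yB'/(leq_ltn_trans (leq_addl _ _) deg_mu).
  have [b0E|b0] := eqVneq b (mi_zero n).
    rewrite b0E in split_mu *; rewrite weight0 y0 (mi_split0r split_mu).
    rewrite [rho * _]mulrA [B * _]mulrA.
    have [xr xB'] := xB mu le_mu mu0.
    split=> [|deg_mu]; apply: ler_wpM2r => //.
    exact/xB'/(leq_ltn_trans (leq_addr _ _) deg_mu).
  have [xar xaB] := xB a le_a a0; have [ybr ybB] := yB b le_b b0.
  have [Wa Wb] := (weight_ge0 x a, weight_ge0 y b).
  split=> [|/(mi_split_deg_gt split_mu)[deg_a|deg_b]].
  - apply: le_trans (ler_pM Wa Wb xar ybr) _.
    by rewrite mulrACA ler_wpM2r ?mulr_ge0 // ler_piMl.
  - apply: le_trans (ler_pM Wa Wb (xaB deg_a) ybr) _.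
    by rewrite mulrACA ler_wpM2r ?mulr_ge0 // ler_piMr.
  - apply: le_trans (ler_pM Wa Wb xar (ybB deg_b)) _.
    by rewrite mulrACA ler_wpM2r ?mulr_ge0 // ler_piMl.
by split=> [|deg_mu]; apply: weight_mul_le => [|a b /terms[] //]; rewrite ?mulr_ge0 //; auto.
Qed.

Lemma weight_bounded_exp x c D lam m :
  weight_bounded x c D lam -> weight_bounded (ps_exp x m) (c ^+ m) (m * D) lam.
Proof.
move=> xB; elim: m => [|m IHm]; first exact: weight_bounded_one.
by rewrite ps_expS exprS mulSn; apply: weight_bounded_mul.
Qed.

(* As x_nu = 0, every term of (x^m)_nu has two factors off the constant term. *)
Lemma weight_exp_vanishing_le x c D nu m : weight_bounded x c D nu -> x nu = 0 ->
  nu != mi_zero n -> (m * D < mi_deg nu)%N ->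
  weight (ps_exp x m) nu <= rho * B * c ^+ m.
Proof.
move=> xB xnu nu0; have [x0 xB'] := xB; have c_ge0 : 0 <= c by rewrite -x0 abs_ge0.
have rhoBc_ge0 k : 0 <= rho * B * c ^+ k by rewrite !mulr_ge0 ?exprn_ge0.
elim: m => [|m IHm] deg_nu.
  by rewrite /weight /ps_exp /= /ps_one (negbTE nu0) abs0 // mul0r.
rewrite ps_expS; apply: weight_mul_le => // a b split_nu.
have [a0E|a0] := eqVneq a (mi_zero n).
  rewrite a0E in split_nu *; rewrite weight0 x0 (mi_split0l split_nu) exprS.
  rewrite [rho * B * _]mulrCA; apply: ler_wpM2l => //; apply/IHm/(leq_ltn_trans _ deg_nu).
  exact: leq_mul (leqnSn m) (leqnn D).
have [b0E|b0] := eqVneq b (mi_zero n).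
  rewrite b0E in split_nu.
  by rewrite /weight (mi_split0r split_nu) xnu abs0 // !mul0r.
have [_ xmB] := weight_bounded_exp m xB.
have [xar xaB] := xB' a (mi_split_lel split_nu) a0.
have [xmr xmB'] := xmB b (mi_split_ler split_nu) b0.
have [Wa Wb] := (weight_ge0 x a, weight_ge0 (ps_exp x m) b).
rewrite mulSn in deg_nu; case: (mi_split_deg_gt split_nu deg_nu) => [deg_a|deg_b].
  apply: le_trans (ler_pM Wa Wb (xaB deg_a) xmr) _.
  by rewrite exprS mulrACA [B * rho]mulrC lexx.
apply: le_trans (ler_pM Wa Wb xar (xmB' deg_b)) _.
by rewrite exprS mulrACA lexx.
Qed.

(* The linearization of ps_exp at the top coefficient isolates p beta^(p-1) y_nu as
   g_nu minus a p-th power that only involves lower coefficients of y. *)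
Lemma weight_root_coef_le y g (beta : K) nu D p : w p%:R = 1 -> y (mi_zero n) = beta ->
  nu != mi_zero n -> ps_exp y p nu = g nu ->
  (forall mu, mi_le mu nu -> mu != mi_zero n -> mu != nu ->
     weight y mu <= rho * w beta /\ ((D < mi_deg mu)%N -> weight y mu <= B * w beta)) ->
  (p * D < mi_deg nu)%N ->
  weight y nu * w beta ^+ p.-1 <= Num.max (weight g nu) (rho * B * w beta ^+ p).
Proof.
move=> wp y0 nu0 ynu yB deg_nu.
pose y' mu := if mu == nu then 0 else y mu.
have y'nu : y' nu = 0 by rewrite /y' eqxx.
have eq_below mu : mi_le mu nu -> mu != nu -> y mu = y' mu.
  by move=> _ mu_nu; rewrite /y' (negbTE mu_nu).
have y'B : weight_bounded y' (w beta) D nu.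
  split=> [|mu le_mu mu0]; first by rewrite /y' eq_sym (negbTE nu0) y0.
  have [->|mu_nu] := eqVneq mu nu.
    by rewrite /weight y'nu abs0 // mul0r !mulr_ge0 ?abs_ge0.
  by rewrite /weight -eq_below //; exact: yB.
have -> : weight y nu * w beta ^+ p.-1 = w (g nu - ps_exp y' p nu) * rpow r nu.
  rewrite -ynu (ps_exp_coef_linear nu0 eq_below y'nu) addrC addKr y0.
  by rewrite !absM // wp [w (beta ^+ _)]absX // mul1r /weight; ring.
apply: le_trans (weightB_le _ _ _) _.
by rewrite ge_max !le_max lexx (weight_exp_vanishing_le y'B) ?orbT.
Qed.

End Bounds.
End Weights.

Section RootConstruction.
Variables (K : fieldType) (n : nat) (g : pseries K n) (beta : K) (p : nat).
Hypotheses (beta_root : beta ^+ p = g (mi_zero n)) (unit_p : p%:R * beta ^+ p.-1 != 0).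

(* Coefficients of degree N + 1 are solved from the linearization
   (w^p)_nu = (lower terms) + p beta^(p-1) w_nu. *)
Fixpoint ps_root_approx (N : nat) : pseries K n :=
  if N is N'.+1 then fun nu => if mi_deg nu == N then
    (g nu - ps_exp (ps_root_approx N') p nu) / (p%:R * beta ^+ p.-1)
    else ps_root_approx N' nu
  else fun nu => if nu == mi_zero n then beta else 0.

Definition ps_root : pseries K n := fun nu => ps_root_approx (mi_deg nu) nu.

Lemma ps_root_approx_high N nu : (N < mi_deg nu)%N -> ps_root_approx N nu = 0.
Proof.
elim: N => [|N IHN] /= deg_nu.
  by rewrite -mi_deg_eq0 eqn0Ngt deg_nu.
by rewrite ifN ?IHN 1?neq_ltn ?deg_nu ?orbT // ltnW.
Qed.

Lemma ps_root_approxE N nu : (mi_deg nu <= N)%N -> ps_root_approx N nu = ps_root nu.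
Proof.
rewrite /ps_root; elim: N => [|N IHN] deg_nu; first by move: deg_nu; rewrite leqn0 => /eqP ->.
have [-> //|neq_deg] := eqVneq (mi_deg nu) N.+1.
by rewrite /= ifN // IHN // -ltnS ltn_neqAle neq_deg.
Qed.

Lemma ps_root0 : ps_root (mi_zero n) = beta.
Proof. by rewrite /ps_root mi_deg_zero /= eqxx. Qed.

Lemma ps_root_exp nu : ps_exp ps_root p nu = g nu.
Proof.
have [->|nu0] := eqVneq nu (mi_zero n); first by rewrite ps_exp_coef0 ps_root0.
have [N degE] : exists N, mi_deg nu = N.+1.
  by exists (mi_deg nu).-1; rewrite prednK // mi_deg_gt0.
have below mu : mi_le mu nu -> mu != nu -> (mi_deg mu <= N)%N.
  by move=> le_mu neq_mu; rewrite -ltnS -degE mi_deg_lt.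
rewrite (@eq_ps_exp_coef _ _ _ (ps_root_approx N.+1) nu); last first.
  move=> mu le_mu; have [->|neq_mu] := eqVneq mu nu; first by rewrite ps_root_approxE ?degE.
  by rewrite ps_root_approxE // ltnW // ltnS below.
have eq_below mu : mi_le mu nu -> mu != nu -> ps_root_approx N.+1 mu = ps_root_approx N mu.
  by move=> le_mu neq_mu; rewrite !ps_root_approxE ?below // ltnW // ltnS below.
rewrite (ps_exp_coef_linear nu0 eq_below (ps_root_approx_high _)) ?degE //.
rewrite ps_root_approxE ?mi_deg_zero // ps_root0 /= degE eqxx.
by rewrite mulrC divfK // addrC subrK.
Qed.

Section SubfieldClosure.
Variable S : K -> Prop.
Hypotheses (S0 : S 0) (S1 : S 1) (SD : forall s t, S s -> S t -> S (s + t))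
  (SM : forall s t, S s -> S t -> S (s * t)) (SN : forall s, S s -> S (- s)).
Hypotheses (S_beta : S beta) (S_g : forall nu, S (g nu))
  (S_inv : S (p%:R * beta ^+ p.-1)^-1).

Lemma ps_root_closed nu : S (ps_root nu).
Proof.
suff S_approx : forall N mu, S (ps_root_approx N mu) by exact: S_approx.
elim=> [|N IHN] mu /=; first by case: ifP.
by case: ifP => // _; apply: SM => //; apply: SD => //; apply: SN; apply: ps_exp_closed.
Qed.

End SubfieldClosure.

End RootConstruction.

Section KPoly.
Variables (k K : fieldType) (iota : {rmorphism k -> K}) (beta : K).

Definition in_kpoly (x : K) := exists q : {poly k}, x = (map_poly iota q).[beta].

Lemma in_kpoly_const c : in_kpoly (iota c).
Proof. by exists c%:P; rewrite map_polyC hornerC. Qed.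

Lemma in_kpoly0 : in_kpoly 0.
Proof. by rewrite -(rmorph0 iota); exact: in_kpoly_const. Qed.

Lemma in_kpoly1 : in_kpoly 1.
Proof. by rewrite -(rmorph1 iota); exact: in_kpoly_const. Qed.

Lemma in_kpoly_gen : in_kpoly beta.
Proof. by exists 'X; rewrite map_polyX hornerX. Qed.

Lemma in_kpolyD x y : in_kpoly x -> in_kpoly y -> in_kpoly (x + y).
Proof. by move=> [q ->] [q' ->]; exists (q + q'); rewrite rmorphD hornerD. Qed.

Lemma in_kpolyM x y : in_kpoly x -> in_kpoly y -> in_kpoly (x * y).
Proof. by move=> [q ->] [q' ->]; exists (q * q'); rewrite rmorphM hornerM. Qed.

Lemma in_kpolyN x : in_kpoly x -> in_kpoly (- x).
Proof. by move=> [q ->]; exists (- q); rewrite rmorphN hornerN. Qed.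

Lemma in_kpolyX x m : in_kpoly x -> in_kpoly (x ^+ m).
Proof.
by move=> kx; elim: m => [|m IHm]; rewrite ?expr0 ?exprS; [exact: in_kpoly1 | exact: in_kpolyM].
Qed.

(* Peel off factors X from a vanishing polynomial until its constant term c is
   nonzero; then beta q(beta) = - c inverts beta. *)
Lemma in_kpolyV : beta != 0 ->
  (exists q : {poly k}, q != 0 /\ root (map_poly iota q) beta) -> in_kpoly beta^-1.
Proof.
move=> beta0 [q []]; elim/poly_ind: q => [|q c IHq]; first by rewrite eqxx.
rewrite /root rmorphD rmorphM /= map_polyX map_polyC hornerMXaddC => qXc0 /eqP root_q.
have [c0|c_neq0] := eqVneq c 0.
  apply: IHq; first by apply: contraNneq qXc0 => ->; rewrite c0 mul0r add0r.
  by move: root_q; rewrite c0 raddf0 addr0 => /eqP; rewrite mulf_eq0 (negbTE beta0) orbF.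
have qbeta : (map_poly iota q).[beta] * beta = - iota c.
  by apply/eqP; rewrite -subr_eq0 opprK root_q.
exists (q * (- c^-1)%:P); rewrite rmorphM /= map_polyC hornerM hornerC.
apply: (mulfI beta0); rewrite mulfV // mulrA [beta * _]mulrC qbeta.
by rewrite raddfN mulrNN -rmorphM mulfV // rmorph1.
Qed.

End KPoly.

Lemma in_kpoly_exp_gen (k K : fieldType) (iota : {rmorphism k -> K}) (b x : K) m :
  in_kpoly iota (b ^+ m) x -> in_kpoly iota b x.
Proof.
move=> [q ->]; exists (q \Po 'X^m).
by rewrite map_comp_poly horner_comp map_polyXn hornerXn.
Qed.

Section KSpan.
Variables (k K : fieldType) (iota : {rmorphism k -> K}).

Definition kcomb m (e : 'I_m -> K) (x : 'I_m -> k) := \sum_j iota (x j) * e j.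

Definition kfree m (e : 'I_m -> K) := forall x, kcomb e x = 0 -> forall j, x j = 0.

Lemma kcombB m (e : 'I_m -> K) x y :
  kcomb e (fun j => x j - y j) = kcomb e x - kcomb e y.
Proof. by rewrite /kcomb -sumrB; apply: eq_bigr => j _; rewrite rmorphB mulrBl. Qed.

Lemma kcombZ m (e : 'I_m -> K) c x : kcomb e (fun j => c * x j) = iota c * kcomb e x.
Proof. by rewrite /kcomb mulr_sumr; apply: eq_bigr => j _; rewrite rmorphM mulrA. Qed.

Lemma kcomb_lift m (e : 'I_m.+1 -> K) i x :
  kcomb e x = iota (x i) * e i + kcomb (e \o lift i) (x \o lift i).
Proof. exact: bigD1_ord. Qed.

Lemma kfree_lift m (e : 'I_m.+1 -> K) i : kfree e -> kfree (e \o lift i).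
Proof.
move=> free_e x' x'0 j.
pose x j0 := if unlift i j0 is Some j1 then x' j1 else 0.
have x_lift : x \o lift i = x' by apply/funext => j1 /=; rewrite /x liftK.
suff /free_e /(_ (lift i j)) : kcomb e x = 0 by rewrite /x liftK.
by rewrite (kcomb_lift _ i) x_lift x'0 /x unlift_none raddf0 mul0r add0r.
Qed.

(* If beta is algebraic, the powers of beta below the minimal degree are a
   k-basis of k[beta]. *)
Lemma kpoly_basis (beta : K) :
  (exists q : {poly k}, q != 0 /\ root (map_poly iota q) beta) ->
  exists m (e : 'I_m -> K), kfree e /\
    forall y, in_kpoly iota beta y -> exists x, y = kcomb e x.
Proof.
move=> alg_beta.
pose vanishes_at d := `[< exists q : {poly k},
  [/\ q != 0, root (map_poly iota q) beta & size q = d] >].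
have ex_vanish : exists d, vanishes_at d.
  by have [q [q0 rq]] := alg_beta; exists (size q); apply/asboolP; exists q.
have [D /asboolP[q0 [q0_neq0 q0_root size_q0]] min_q0] := ex_minnP ex_vanish.
set m := (size q0).-1.
have size_q0E : size q0 = m.+1 by rewrite prednK // size_poly_gt0.
have kcomb_horner x : kcomb (fun j : 'I_m => beta ^+ j) x =
    (map_poly iota (\poly_(j < m) oapp x 0 (insub j))).[beta].
  rewrite (horner_coef_wide (n := m)) ?size_map_poly ?size_poly //.
  by apply: eq_bigr => j _; rewrite coef_map coef_poly ltn_ord valK.
exists m, (fun j : 'I_m => beta ^+ j); split.
  move=> x x0 j; pose Q := \poly_(j < m) oapp x 0 (insub j).
  have -> : x j = Q`_j by rewrite coef_poly ltn_ord valK.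
  suff -> : Q = 0 by rewrite coef0.
  apply: contraTeq (size_poly m (fun j => oapp x 0 (insub j))) => Q_neq0.
  rewrite -ltnNge -size_q0E size_q0 min_q0 //.
  by apply/asboolP; exists Q; rewrite /root -kcomb_horner x0.
move=> y [Q ->]; exists (fun j : 'I_m => (Q %% q0)`_j).
rewrite {1}(divp_eq Q q0) rmorphD rmorphM /= hornerD hornerM (rootP q0_root) mulr0 add0r.
rewrite (horner_coef_wide (n := m)); last by rewrite size_map_poly -ltnS -size_q0E ltn_modp.
by rewrite /kcomb; apply: eq_bigr => j _; rewrite coef_map.
Qed.

End KSpan.

Lemma invr_natS_lt (R : realType) (d : R) : 0 < d ->
  exists N0 : nat, forall N, (N0 <= N)%N -> N.+1%:R^-1 < d.
Proof.
move=> d_gt0; exists (Num.Def.archi_bound d^-1) => N le_N.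
have lt_N : d^-1 < N.+1%:R.
  apply: lt_le_trans (archi_boundP _) _; first by rewrite invr_ge0 ltW.
  by rewrite ler_nat; exact: leqW.
by rewrite -(invrK d) ltf_pV2 ?posrE ?invr_gt0 ?ltr0Sn.
Qed.

Section NormEquivalence.
Variables (R : realType) (k K : fieldType) (v : k -> R) (vb : K -> R)
  (iota : {rmorphism k -> K}).
Hypotheses (hv : nonarch_abs v) (hvb : nonarch_abs vb) (hcomp : complete_abs v)
  (hext : forall x, vb (iota x) = v x).

Lemma kcomb_abs_le m (e : 'I_m -> K) x B : 0 <= B ->
  (forall j, v (x j) * vb (e j) <= B) -> vb (kcomb iota e x) <= B.
Proof. by move=> B0 xB; apply: abs_sum => // j _; rewrite absM // hext. Qed.

Section NullSequence.
Variables (m : nat) (e : 'I_m.+1 -> K) (i : 'I_m.+1) (z : nat -> 'I_m.+1 -> k).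
Hypotheses (free_e : kfree iota e)
  (hyperplane_bound : forall j, exists2 C, 0 < C &
     forall x, x i = 0 -> v (x j) <= C * vb (kcomb iota e x))
  (z_i : forall N, z N i = 1)
  (z_null : forall d, 0 < d -> exists N0 : nat, forall N, (N0 <= N)%N ->
     vb (kcomb iota e (z N)) < d).

Lemma null_seq_coord_cvg j : exists l, forall eps, 0 < eps ->
  exists N0 : nat, forall N, (N0 <= N)%N -> v (z N j - l) < eps.
Proof.
apply: hcomp => eps eps0; have [C C0 CB] := hyperplane_bound j.
have [N0 N0P] := z_null (divr_gt0 eps0 C0); exists N0 => N M le_N le_M.
have := CB (fun j => z N j - z M j); rewrite !z_i subrr kcombB => /(_ erefl) zC.
apply: le_lt_trans zC _; rewrite mulrC -ltr_pdivlMr //.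
by apply: le_lt_trans (absD_max hvb _ _) _; rewrite absN // gt_max !N0P.
Qed.

(* A limit of the z N would be a nontrivial vanishing k-combination of e. *)
Lemma null_seq_false : False.
Proof.
have [l lP] := choice null_seq_coord_cvg.
pose l' j := if j == i then 1 else l j.
have l'P j eps : 0 < eps -> exists N0 : nat, forall N, (N0 <= N)%N ->
    v (z N j - l' j) < eps.
  rewrite /l'; case: eqP => [->|_]; last exact: lP.
  by move=> eps0; exists 0%N => N _; rewrite z_i subrr abs0.
pose E := 1 + \sum_j vb (e j).
have E_ge1 : 1 <= E by rewrite lerDl sumr_ge0 // => j _; exact: abs_ge0.
have E_gt0 : 0 < E := lt_le_trans ltr01 E_ge1.
have le_E j : vb (e j) <= E.
  by rewrite /E (bigD1 j) //= addrCA ler_wpDr // addr_ge0 ?sumr_ge0 // => j' _; exact: abs_ge0.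
suff /free_e /(_ i) : kcomb iota e l' = 0 by rewrite /l' eqxx => /eqP; rewrite oner_eq0.
apply/eqP; rewrite -(abs_eq0 hvb) eq_le abs_ge0 // andbT; apply/ler_addgt0Pr => d d0.
have dE0 : 0 < d / E by exact: divr_gt0.
have [Nj NjP] := choice (fun j => l'P j _ dE0).
have [N1 N1P] := z_null dE0.
pose N := (\max_j Nj j + N1)%N.
have dE_le : d / E <= d by rewrite ler_pdivrMr // ler_peMr // ltW.
rewrite add0r -[kcomb _ _ _](subrK (kcomb iota e (z N))) -kcombB.
apply: absD_le => //; last exact/ltW/(lt_le_trans (N1P N (leq_addl _ _))).
apply: kcomb_abs_le => [|j]; first exact: ltW.
rewrite -(divfK (lt0r_neq0 E_gt0) d); apply: ler_pM => //; try exact: abs_ge0.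
by rewrite -absN // opprB ltW // NjP // (leq_trans (leq_bigmax j)) ?leq_addr.
Qed.

End NullSequence.

Lemma kfree_bounded_below m (e : 'I_m.+1 -> K) i : kfree iota e ->
  (forall j, exists2 C, 0 < C & forall x, x i = 0 -> v (x j) <= C * vb (kcomb iota e x)) ->
  exists2 delta, 0 < delta & forall x, x i = 1 -> delta <= vb (kcomb iota e x).
Proof.
move=> free_e bound; apply: contrapT => no_delta.
have small N : exists x, x i = 1 /\ vb (kcomb iota e x) < N.+1%:R^-1.
  apply: contrapT => not_small; apply: no_delta.
  exists N.+1%:R^-1 => [|x xi]; first by rewrite invr_gt0 ltr0Sn.
  by rewrite leNgt; apply/negP => lt_x; apply: not_small; exists x.
have [z zP] := choice small.
apply: (null_seq_false free_e bound (fun N => (zP N).1)) => d d0.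
have [N0 N0P] := invr_natS_lt d0; exists N0 => N le_N.
exact: lt_trans (zP N).2 (N0P N le_N).
Qed.

(* Equivalence of norms on a finite-dimensional space over a complete field. *)
Lemma kfree_coord_bound m (e : 'I_m -> K) : kfree iota e ->
  forall i, exists2 C, 0 < C & forall x, v (x i) <= C * vb (kcomb iota e x).
Proof.
elim: m e => [|m IHm] e free_e i; first by case: i.
have bound j : exists2 C, 0 < C &
    forall x, x i = 0 -> v (x j) <= C * vb (kcomb iota e x).
  case: (unliftP i j) => [j' ->|->]; last first.
    by exists 1 => // x ->; rewrite abs0 // mulr_ge0 ?abs_ge0.
  have [C C0 CB] := IHm (e \o lift i) (kfree_lift (i := i) free_e) j'.
  exists C => // x xi; rewrite (kcomb_lift _ _ i) xi raddf0 mul0r add0r.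
  exact: CB (x \o lift i).
have [delta delta0 deltaB] := kfree_bounded_below free_e bound.
exists delta^-1; rewrite ?invr_gt0 // => x.
have [xi0|xi_neq0] := eqVneq (x i) 0.
  by rewrite xi0 abs0 //; apply: mulr_ge0; [rewrite invr_ge0 ltW | exact: abs_ge0].
have := deltaB (fun j => (x i)^-1 * x j); rewrite mulVf // kcombZ absM // hext absV //.
have vxi_gt0 : 0 < v (x i) by rewrite lt0r abs_eq0 // xi_neq0 abs_ge0.
by move=> /(_ erefl); rewrite mulrC ler_pdivlMr // ler_pdivlMl // mulrC.
Qed.

End NormEquivalence.

Section TateTensor.
Variables (R : realType) (k K : fieldType) (v : k -> R) (vb : K -> R)
  (iota : {rmorphism k -> K}) (n : nat) (r : 'I_n -> R).
Hypotheses (hv : nonarch_abs v) (hvb : nonarch_abs vb) (hcomp : complete_abs v)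
  (hext : forall x, vb (iota x) = v x) (hr : forall i, 0 < r i).

(* Expanding the coefficients in a k-basis of k[beta], the norm equivalence
   turns the decay of the coefficients into decay of each coordinate series. *)
Lemma in_tate_tensor_of_kpoly (beta : K) (g : pseries K n) :
  (exists q : {poly k}, q != 0 /\ root (map_poly iota q) beta) ->
  (forall nu, in_kpoly iota beta (g nu)) ->
  (forall eps, 0 < eps -> exists N : nat, forall nu, (N < mi_deg nu)%N ->
     weight r vb g nu < eps) ->
  in_tate_tensor v r iota g.
Proof.
move=> alg_beta kg g_small.
have [m [e [free_e span_e]]] := kpoly_basis alg_beta.
have [X XE] := choice (fun nu => span_e _ (kg nu)).
exists m, (fun j nu => X nu j), e; split => [j eps eps0|]; last exact: XE.
have [C C0 CB] := kfree_coord_bound hv hvb hcomp hext free_e j.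
have [N NP] := g_small _ (divr_gt0 eps0 C0); exists N => nu lt_N.
apply: le_lt_trans (ler_wpM2r (rpow_ge0 hr nu) (CB (X nu))) _.
by rewrite -XE -mulrA mulrC -ltr_pdivlMr // NP.
Qed.

End TateTensor.

Lemma exists_expr_lt (R : realType) (rho d : R) : 0 <= rho -> rho < 1 -> 0 < d ->
  exists j : nat, rho ^+ j.+1 < d.
Proof.
move=> rho_ge0 rho_lt1 d_gt0.
have [->|rho_neq0] := eqVneq rho 0; first by exists 0%N; rewrite expr1.
have rho_gt0 : 0 < rho by rewrite lt0r rho_neq0.
pose h := rho^-1 - 1.
have h_gt0 : 0 < h by rewrite subr_gt0 invf_gt1.
have bernoulli j : 1 + j%:R * h <= (1 + h) ^+ j.
  elim: j => [|j IHj]; first by rewrite mul0r addr0 expr0.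
  have jh_ge0 : 0 <= j%:R * h by apply: mulr_ge0; rewrite ?ler0n ?ltW.
  rewrite exprS -natr1; apply: le_trans (_ : _ <= (1 + h) * (1 + j%:R * h)) _.
    by nra.
  by apply: ler_wpM2l => //; rewrite addr_ge0 ?ltW.
have [N NP] := invr_natS_lt (mulr_gt0 d_gt0 h_gt0); exists N.
have rhoE : rho = (1 + h)^-1 by rewrite addrC subrK invrK.
have Nh_gt0 : 0 < N.+1%:R * h by rewrite mulr_gt0 ?ltr0Sn.
rewrite rhoE exprVn; apply: (@le_lt_trans _ _ (N.+1%:R * h)^-1).
  have h1_gt0 : 0 < 1 + h by rewrite addr_gt0.
  rewrite lef_pV2 ?posrE ?exprn_gt0 //.
  by apply: le_trans (bernoulli _); rewrite lerDr ler01.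
by rewrite invfM ltr_pdivrMr // NP.
Qed.

Lemma closed_field_proot (F : closedFieldType) (p : nat) (x : F) : (0 < p)%N ->
  exists y, y ^+ p = x.
Proof.
move=> p_gt0; have /closed_rootP[y] : size ('X^p - x%:P) != 1%N.
  by rewrite size_XnsubC // eqSS -lt0n.
by rewrite /root hornerD hornerN hornerXn hornerC subr_eq0 => /eqP; exists y.
Qed.

Section DominantConstant.
Variables (R : realType) (k : fieldType) (v : k -> R) (n : nat) (r : 'I_n -> R)
  (kbar : closedFieldType) (iota : {rmorphism k -> kbar}) (vbar : kbar -> R)
  (p : nat) (rho : R).
Hypotheses (hv : nonarch_abs v) (hcomp : complete_abs v) (hvbar : nonarch_abs vbar)
  (hext : forall x, vbar (iota x) = v x) (hr : forall i, 0 < r i)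
  (halg : forall x : kbar, exists q : {poly k}, q != 0 /\ root (map_poly iota q) x)
  (p_gt0 : (0 < p)%N) (vbar_p : vbar p%:R = 1)
  (rho_ge0 : 0 <= rho) (rho_lt1 : rho < 1).

(* g = g_0 (1 + h) with h small: the invariant preserved by taking p-th roots. *)
Definition const_dominant (g : pseries kbar n) : Prop :=
  [/\ g (mi_zero n) != 0,
      forall nu, nu != mi_zero n -> weight r vbar g nu <= rho * vbar (g (mi_zero n)),
      forall eps, 0 < eps -> exists N : nat, forall nu, (N < mi_deg nu)%N ->
         weight r vbar g nu < eps
    & forall nu, in_kpoly iota (g (mi_zero n)) (g nu)].

Section Root.
Variables (g : pseries kbar n) (b : kbar).
Hypotheses (g_dom : const_dominant g) (b_root : b ^+ p = g (mi_zero n)).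

Local Notation w := (ps_root g b p).
Local Notation c := (vbar b).

Lemma proot_neq0 : b != 0.
Proof.
have [g0 _ _ _] := g_dom; apply: contra_neq g0 => b0.
by rewrite -b_root b0 expr0n gtn_eqF.
Qed.

Lemma proot_abs_gt0 : 0 < c.
Proof. by rewrite lt0r abs_eq0 // proot_neq0 abs_ge0. Qed.

Lemma proot_unit : p%:R * b ^+ p.-1 != 0.
Proof.
by rewrite mulf_neq0 ?expf_neq0 ?proot_neq0 // -(abs_eq0 hvbar) vbar_p oner_eq0.
Qed.

Lemma ps_root_exp_eq nu : ps_exp w p nu = g nu.
Proof. exact: ps_root_exp b_root proot_unit nu. Qed.

Lemma ps_root_weight_le_max B D d nu : 0 <= B -> nu != mi_zero n ->
  (p * D < mi_deg nu)%N ->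
  (forall mu, mi_le mu nu -> mu != mi_zero n -> mu != nu ->
     weight r vbar w mu <= rho * c /\ ((D < mi_deg mu)%N -> weight r vbar w mu <= B * c)) ->
  weight r vbar g nu <= d * c ^+ p ->
  weight r vbar w nu <= Num.max d (rho * B) * c.
Proof.
move=> B_ge0 nu0 deg_nu wB gd.
have cp1_gt0 : 0 < c ^+ p.-1 by rewrite exprn_gt0 ?proot_abs_gt0.
have le_w := weight_root_coef_le hr hvbar rho_ge0 (ltW rho_lt1) B_ge0 vbar_p
  (ps_root0 _ _ _) nu0 (ps_root_exp_eq nu) wB deg_nu.
rewrite -(ler_pM2r cp1_gt0); apply: le_trans le_w _.
have cp_ge0 : 0 <= c ^+ p by rewrite exprn_ge0 ?ltW ?proot_abs_gt0.
rewrite -[Num.max d _ * c * _]mulrA -exprS prednK // maxr_pMl //.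
exact: le_max2 gd (lexx _).
Qed.

Lemma ps_root_weight_le nu : nu != mi_zero n -> weight r vbar w nu <= rho * c.
Proof.
have [_ g_le _ _] := g_dom.
have vg0 : vbar (g (mi_zero n)) = c ^+ p by rewrite -b_root absX.
suff wN : forall N nu, (mi_deg nu < N)%N -> nu != mi_zero n ->
    weight r vbar w nu <= rho * c.
  by move=> nu0; apply: wN (ltnSn _) nu0.
elim=> [//|N IHN] {}nu deg_nu nu0.
have le_w := ps_root_weight_le_max (D := 0) rho_ge0 nu0 _ _ (_ : _ <= rho * c ^+ p).
rewrite max_l in le_w; last exact: ler_piMl rho_ge0 (ltW rho_lt1).
apply: le_w; first by rewrite muln0 mi_deg_gt0.
  move=> mu le_mu mu0 mu_nu; have lt_mu := mi_deg_lt le_mu mu_nu.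
  by split=> [|_]; apply: IHN => //; apply: leq_trans lt_mu _.
by rewrite -vg0 g_le.
Qed.

Lemma ps_root_weight_small eps : 0 < eps ->
  exists N : nat, forall nu, (N < mi_deg nu)%N -> weight r vbar w nu < eps.
Proof.
move=> eps_gt0; have c_gt0 := proot_abs_gt0; have [_ _ g_small _] := g_dom.
pose d := eps / c / 2.
have d_gt0 : 0 < d by rewrite !divr_gt0.
have [Ng NgP] := g_small _ (mulr_gt0 d_gt0 (exprn_gt0 p c_gt0)).
have tail j : exists D : nat, forall nu, (D < mi_deg nu)%N ->
    weight r vbar w nu <= Num.max d (rho ^+ j.+1) * c.
  elim: j => [|j [D DP]].
    exists 0%N => nu deg_nu; rewrite mi_deg_gt0 in deg_nu.
    apply: le_trans (ps_root_weight_le deg_nu) _; apply: ler_wpM2r; first exact: ltW.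
    by rewrite expr1 le_max lexx orbT.
  exists (maxn Ng (p * D)) => nu; rewrite gtn_max => /andP[deg_g deg_w].
  have nu0 : nu != mi_zero n by rewrite -mi_deg_gt0 (leq_ltn_trans _ deg_g).
  have B_ge0 : 0 <= Num.max d (rho ^+ j.+1) by rewrite le_max ltW.
  apply: le_trans (ps_root_weight_le_max B_ge0 nu0 deg_w _ (ltW (NgP _ deg_g))) _.
    by move=> mu _ mu0 _; split=> [|/DP //]; exact: ps_root_weight_le.
  apply: ler_wpM2r; first exact: ltW.
  rewrite maxr_pMr // -exprS ge_max le_max lexx /=.
  exact: le_max2 (ler_piMl (ltW d_gt0) (ltW rho_lt1)) (lexx _).
have [j rhoj] := exists_expr_lt rho_ge0 rho_lt1 d_gt0.
have [D DP] := tail j; exists D => nu /DP; rewrite max_l => [le_w|]; last exact: ltW.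
apply: le_lt_trans le_w _; rewrite /d mulrAC divfK ?lt0r_neq0 //; lra.
Qed.

Lemma ps_root_kpoly nu : in_kpoly iota b (w nu).
Proof.
have [_ _ _ g_k] := g_dom.
apply: ps_root_closed; [exact: in_kpoly0 | exact: in_kpoly1 | exact: in_kpolyD |
  exact: in_kpolyM | exact: in_kpolyN | exact: in_kpoly_gen | | ].
  by move=> mu; apply: (in_kpoly_exp_gen (m := p)); rewrite b_root.
rewrite invfM; apply: in_kpolyM.
  by rewrite -(rmorph_nat iota) -fmorphV; exact: in_kpoly_const.
by rewrite -exprVn; apply/in_kpolyX/in_kpolyV/halg/proot_neq0.
Qed.

End Root.

Lemma const_dominant_root g : const_dominant g ->
  exists w, const_dominant w /\ forall nu, ps_exp w p nu = g nu.
Proof.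
move=> g_dom; have [b b_root] := closed_field_proot (g (mi_zero n)) p_gt0.
exists (ps_root g b p); split; last exact: ps_root_exp_eq.
rewrite /const_dominant ps_root0; split.
- exact: proot_neq0 g_dom b_root.
- exact: ps_root_weight_le.
- exact: ps_root_weight_small.
- exact: ps_root_kpoly.
Qed.

Lemma const_dominant_proots g : const_dominant g -> has_compatible_proots v r iota p g.
Proof.
move=> g_dom.
have step (gs : {g | const_dominant g}) : exists ws : {w | const_dominant w},
    forall nu, ps_exp (sval ws) p nu = sval gs nu.
  by have [w [w_dom wP]] := const_dominant_root (svalP gs); exists (exist _ w w_dom).
have [F FP] := choice step.
pose s e := sval (iter e F (exist _ g g_dom)).
exists s; split=> [e|]; last by split=> // e nu; rewrite /s iterS; exact: FP.
have [_ _ s_small s_k] := svalP (iter e F (exist _ g g_dom)).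
apply: (in_tate_tensor_of_kpoly hv hvbar hcomp hext hr (halg _)).
  exact: s_k.
exact: s_small.
Qed.

End DominantConstant.

Section TateNorm.
Variables (R : realType) (k : fieldType) (v : k -> R) (n : nat) (r : 'I_n -> R).
Hypotheses (hv : nonarch_abs v) (hr : forall i, 0 < r i).
Variable f : pseries k n.
Hypothesis f_tate : in_tate v r f.

(* Only the finitely many indices of degree at most N can have weight >= 1. *)
Lemma in_tate_has_sup : has_sup [set x : R | exists nu, x = v (f nu) * rpow r nu].
Proof.
split; first by exists (weight r v f (mi_zero n)), (mi_zero n).
have [N NP] := f_tate ltr01.
pose embed (mu : {ffun 'I_n -> 'I_N.+1}) : multi_index n := [ffun i => nat_of_ord (mu i)].
pose U := 1 + \sum_mu weight r v f (embed mu).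
have sum_ge0 : 0 <= \sum_mu weight r v f (embed mu).
  by apply: sumr_ge0 => mu _; exact: weight_ge0.
exists U => _ [nu ->]; rewrite -/(weight r v f nu).
have [/NP/ltW lt1|deg_nu] := ltnP N (mi_deg nu).
  by apply: le_trans lt1 _; rewrite lerDl.
pose mu : {ffun 'I_n -> 'I_N.+1} := [ffun i => inord (nu i)].
have -> : nu = embed mu.
  by apply/ffunP => i; rewrite !ffunE inordK // ltnS (leq_trans (leq_mi_deg nu i)).
rewrite /U (bigD1 mu) //= addrCA lerDl addr_ge0 // sumr_ge0 // => mu' _.
exact: weight_ge0.
Qed.

Lemma weight_le_tate_norm nu : weight r v f nu <= tate_norm v r f.
Proof. by apply: (sup_upper_bound in_tate_has_sup); exists nu. Qed.

Lemma tate_norm_ge0 : 0 <= tate_norm v r f.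
Proof. exact: le_trans (weight_ge0 hr hv f (mi_zero n)) (weight_le_tate_norm _). Qed.

Variables (kbar : closedFieldType) (iota : {rmorphism k -> kbar}) (vbar : kbar -> R).
Hypotheses (hvbar : nonarch_abs vbar) (hext : forall x, vbar (iota x) = v x).

Lemma tensor_add_const_dominant a : tate_norm v r f < vbar a ->
  const_dominant r iota vbar (tate_norm v r f / vbar a) (tensor_add_const iota f a).
Proof.
set M := tate_norm v r f => lt_a; set g := tensor_add_const iota f a.
have a_gt0 : 0 < vbar a := le_lt_trans tate_norm_ge0 lt_a.
have g0 : g (mi_zero n) = a + iota (f (mi_zero n)).
  by rewrite /g /tensor_add_const eqxx addrC.
have vg0 : vbar (g (mi_zero n)) = vbar a.
  rewrite g0 absD_dominant // hext; apply: le_lt_trans lt_a.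
  by have := weight_le_tate_norm (mi_zero n); rewrite weight0.
have weight_g nu : nu != mi_zero n -> weight r vbar g nu = weight r v f nu.
  by move=> nu0; rewrite /weight /g /tensor_add_const (negbTE nu0) addr0 hext.
split.
- by rewrite -(abs_eq0 hvbar) vg0 gt_eqF.
- by move=> nu nu0; rewrite weight_g // vg0 divfK ?gt_eqF //; exact: weight_le_tate_norm.
- move=> eps eps_gt0; have [N NP] := f_tate eps_gt0; exists N => nu deg_nu.
  by rewrite weight_g ?NP // -mi_deg_gt0 (leq_ltn_trans _ deg_nu).
move=> nu; rewrite {2}/g /tensor_add_const; apply: in_kpolyD; first exact: in_kpoly_const.
case: ifP => _; last exact: in_kpoly0.
rewrite -[a](addrK (iota (f (mi_zero n)))) -g0.
by apply/in_kpolyD/in_kpolyN/in_kpoly_const/in_kpoly_gen.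
Qed.

End TateNorm.

Theorem lemma2p10 (R : realType) (k : fieldType) (v : k -> R)
  (hv : nonarch_abs v) (hcomp : complete_abs v) (hnt : nontrivial_abs v)
  (p : nat) (hp : prime p) (hvp : v (p%:R) = 1)
  (n : nat) (r : 'I_n -> R) (hr : forall i, 0 < r i)
  (f : pseries k n) (hf : in_tate v r f)
  (kbar : closedFieldType) (iota : {rmorphism k -> kbar})
  (halg : forall x : kbar, exists q : {poly k}, q != 0 /\ root (map_poly iota q) x)
  (vbar : kbar -> R) (hvbar : nonarch_abs vbar)
  (hext : forall x : k, vbar (iota x) = v x) :
  forall a : kbar, tate_norm v r f < vbar a ->
    has_compatible_proots v r iota p (tensor_add_const iota f a).
Proof.
move=> a lt_a.
have vbar_p : vbar p%:R = 1 by rewrite -(rmorph_nat iota) hext.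
have a_gt0 : 0 < vbar a := le_lt_trans (tate_norm_ge0 hv hr hf) lt_a.
apply: (const_dominant_proots hv hcomp hvbar hext hr halg (prime_gt0 hp) vbar_p).
- exact: divr_ge0 (tate_norm_ge0 hv hr hf) (ltW a_gt0).
- by rewrite ltr_pdivrMr // mul1r.
- exact: tensor_add_const_dominant.
Qed.
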